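(* Let $m\ge1$, let $\lambda_1\ge0$ and $\lambda_2\ge0$, and let $f_1,\dots,f_m$ be real numbers ordered so that $|f_1|\le|f_2|\le\cdots\le|f_m|$. Then there exist real numbers $\xi_{i0}\in[-\lambda_1,\lambda_1]$ for $i=1,\dots,m$ and real numbers $\xi_{ij}\in[-\lambda_2,\lambda_2]$ for $i\ne j\in\{1,\dots,m\}$, satisfying $|\xi_{ij}|+|\xi_{ji}|\le\lambda_2$ for all $i\neq j$, such that $$f_i+\xi_{i0}+\sum_{j\in\{1,\dots,m\}\setminus\{i\}}\xi_{ij}=0,\qquad i=1,\dots,m,$$ if and only if $$\sum_{j=k+1}^{m}|f_j|\le\lambda_1(m-k)+\lambda_2\frac{(m-k)(m+k-1)}{2}\quad\text{for }k=0,\dots,m-1.$$ *)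

From mathcomp Require Import all_boot all_order all_algebra.
From mathcomp Require Import reals.
Set Implicit Arguments. Unset Strict Implicit. Unset Printing Implicit Defensive.

From mathcomp Require Import all_boot all_order all_algebra.
From mathcomp Require Import reals functions topology normedtype.
From mathcomp Require Import lra ring zify.
Set Implicit Arguments. Unset Strict Implicit. Unset Printing Implicit Defensive.
Import Order.TTheory GRing.Theory Num.Theory Num.Def.
Local Open Scope ring_scope.

(* Think of the indices as m agents; agent i must absorb |f_i|, using its own
   reservoir lambda1 and, for every other agent j, a share of a capacity
   lambda2 that the pair {i, j} splits between its two members.

   Necessity: summing the balance equations over the n = m - k agents with the
   largest demands, each agent uses at most lambda1 of its own, the pairs inside
   the group contribute at most lambda2 each and the pairs leaving the group at
   most lambda2 each; this gives lambda1 n + lambda2 P(m, n), where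
   P(m, n) = n (2m - n - 1) / 2 is the number of pairs meeting an n-set.

   Sufficiency is a fractional version of Landau's theorem on score sequences.
   Because the demands are sorted, the tail inequalities imply the same bound
   for every group of agents ("subset feasibility").  Subset feasibility is
   then shown to suffice for pair shares a_ij >= 0 with a_ij + a_ji <= lambda2
   covering every demand, by induction on m: the last agent takes its demand
   from the others by water-filling (taking more from agents with smaller
   demands), and the concavity of n |-> P(m, n) shows that the remaining agents
   are still subset feasible.  Finally the shares are rescaled by f_i to turn
   the inequalities into the required balance equations. *)

Definition card_below (m : nat) (s : pred nat) : nat := (\sum_(j < m | s j) 1)%N.

Lemma big_below_recr (R : nmodType) m (s : pred nat) (F : nat -> R) :
  \sum_(j < m.+1 | s j) F j = \sum_(j < m | s j) F j + (if s m then F m else 0).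
Proof. by rewrite big_mkcond big_ord_recr /= -big_mkcond. Qed.

Lemma card_belowS m (s : pred nat) : card_below m.+1 s = (card_below m s + s m)%N.
Proof. by rewrite /card_below big_mkcond big_ord_recr /= -big_mkcond; case: (s m). Qed.

Lemma big_below_eq (R : nmodType) m (s t : pred nat) (F : nat -> R) :
  (forall j, (j < m)%N -> s j = t j) ->
  \sum_(j < m | s j) F j = \sum_(j < m | t j) F j.
Proof. by move=> st; apply: eq_bigl => j; apply: st. Qed.

Lemma card_below_eq m (s t : pred nat) :
  (forall j, (j < m)%N -> s j = t j) -> card_below m s = card_below m t.
Proof. by move=> st; apply: eq_bigl => j; apply: st. Qed.

Lemma sum_const_below (R : realType) m (s : pred nat) (x : R) :
  \sum_(j < m | s j) x = (card_below m s)%:R * x.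
Proof. by rewrite /card_below natr_sum mulr_suml; apply: eq_bigr => j _; rewrite mul1r. Qed.

Lemma card_belowID m (s a : pred nat) :
  card_below m s =
  (card_below m (fun j => s j && a j) + card_below m (fun j => s j && ~~ a j))%N.
Proof. by rewrite /card_below (bigID (fun j : 'I_m => a j)). Qed.

Lemma card_belowC m (s : pred nat) :
  (card_below m s + card_below m (fun j => ~~ s j))%N = m.
Proof.
by rewrite /card_below -(bigID (fun j : 'I_m => s j) predT) /= sum1_card card_ord.
Qed.

Lemma card_below_le m (s : pred nat) : (card_below m s <= m)%N.
Proof. by rewrite -[X in (_ <= X)%N](card_belowC m s) leq_addr. Qed.

Lemma card_below_tail m k : card_below m (fun j => (k <= j)%N) = (m - k)%N.
Proof.
elim: m => [|m IH]; first by rewrite /card_below big_ord0.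
by rewrite card_belowS IH /=; case: leqP => /= ?; lia.
Qed.

(* P(M, n): the number of pairs of distinct elements of an M-set that meet a
   given n-subset; it is the total pair capacity available to n agents. *)
Definition pair_budget (R : realType) (M n : nat) : R :=
  n%:R * (2 * M%:R - n%:R - 1) / 2.

Lemma pair_budgetS (R : realType) M n :
  pair_budget R M.+1 n = pair_budget R M n + n%:R.
Proof. by rewrite /pair_budget -addn1 natrD; field. Qed.

Lemma pair_budget_succ (R : realType) M n :
  pair_budget R M n.+1 = pair_budget R M n + (M%:R - n%:R - 1).
Proof. by rewrite /pair_budget -addn1 natrD; field. Qed.

(* Pairs inside the group plus pairs leaving it. *)
Lemma pair_budget_split (R : realType) M n :
  pair_budget R M n = n%:R * (n%:R - 1) / 2 + n%:R * (M%:R - n%:R).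
Proof. by rewrite /pair_budget; field. Qed.

Lemma pair_budget_tail (R : realType) m k : (k <= m)%N ->
  pair_budget R m (m - k) = ((m - k) * (m + k - 1))%:R / 2.
Proof.
move=> le_km; have [->|lt_km] := eqVneq k m; first by rewrite subnn /pair_budget !mul0r.
have sum_mk : (m + k - 1 + (m - k) + 1 = 2 * m)%N by lia.
have /(congr1 (fun x => x%:R : R)) := sum_mk; rewrite /= !natrD => sumR.
by rewrite /pair_budget natrM; congr (_ / 2); congr (_ * _); lra.
Qed.

(* Concavity of n |-> P(M, n): a bound of slope L at u and one of slope L
   beyond u + k combine into a bound at u + k, whatever L is. *)
Lemma pair_budget_interpolate (R : realType) (M : nat) (l X L : R) (u k t : nat) :
  0 <= l ->
  X <= l * pair_budget R M u + k%:R * L ->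
  X <= l * pair_budget R M (u + k + t) - t%:R * L ->
  X <= l * pair_budget R M (u + k).
Proof.
move=> l0 low high.
have [k0|k_neq0] := eqVneq k 0%N.
  by move: low; rewrite k0 addn0 mul0r addr0.
move: low high; rewrite /pair_budget !natrD.
set U := u%:R; set K := k%:R; set T := t%:R; set MM := M%:R.
have K_gt0 : 0 < K by rewrite ltr0n lt0n.
have T_ge0 : 0 <= T by rewrite ler0n.
move=> low high.
have mix : (K + T) * X <= T * (l * (U * (2 * MM - U - 1) / 2) + K * L)
   + K * (l * ((U + K + T) * (2 * MM - (U + K + T) - 1) / 2) - T * L).
  by nra.
have mixE : T * (l * (U * (2 * MM - U - 1) / 2) + K * L)
   + K * (l * ((U + K + T) * (2 * MM - (U + K + T) - 1) / 2) - T * L)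
   = (K + T) * (l * ((U + K) * (2 * MM - (U + K) - 1) / 2)) - l * (K * T * (K + T)) / 2.
  by field.
have gap : 0 <= l * (K * T * (K + T)) / 2.
  by rewrite !mulr_ge0 ?addr_ge0 ?invr_ge0 ?ler0n // ltW.
have : (K + T) * X <= (K + T) * (l * ((U + K) * (2 * MM - (U + K) - 1) / 2)) by lra.
by rewrite ler_pM2l //; lra.
Qed.

Definition subset_feasible {R : realType} (l : R) (m : nat) (e : nat -> R) : Prop :=
  forall s : pred nat, \sum_(j < m | s j) e j <= l * pair_budget R m (card_below m s).

Lemma subset_feasible_restr (R : realType) (l : R) m (e : nat -> R) (s : pred nat) :
  subset_feasible l m.+1 e ->
  \sum_(j < m | s j) e j <= l * pair_budget R m.+1 (card_below m s).
Proof.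
move=> /(_ (fun j => s j && (j != m))).
rewrite (@big_below_recr _ m (fun j => s j && (j != m))) card_belowS /= eqxx andbF addr0 addn0.
have below_m j : (j < m)%N -> s j && (j != m) = s j by move=> /ltn_eqF ->; rewrite andbT.
by rewrite (big_below_eq e below_m) (card_below_eq below_m).
Qed.

Lemma continuous_bigsum (R : realType) (m : nat) (g : nat -> R -> R) :
  (forall j, continuous (g j : R^o -> R^o)) ->
  continuous ((fun L => \sum_(j < m) g j L) : R^o -> R^o).
Proof.
move=> gC; rewrite -fct_sumE.
apply: (big_ind (fun h : R^o -> R^o => continuous h)) => [x|h1 h2 h1C h2C x|j _].
- exact: (@cst_continuous _ _ 0 x).
- exact: (continuousD (h1C x) (h2C x)).
- exact: gC.
Qed.

Definition clamp (R : realType) (l x : R) : R := minr (maxr x 0) l.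

Lemma clamp_ge0 (R : realType) (l x : R) : 0 <= l -> 0 <= clamp l x.
Proof. by move=> l0; rewrite /clamp le_min le_max lexx orbT. Qed.

Lemma clamp_le (R : realType) (l x : R) : clamp l x <= l.
Proof. by rewrite /clamp ge_min lexx orbT. Qed.

Lemma clamp0 (R : realType) (l x : R) : 0 <= l -> x <= 0 -> clamp l x = 0.
Proof. by move=> l0 x0; rewrite /clamp (max_idPr x0) min_l. Qed.

Lemma clamp_top (R : realType) (l x : R) : 0 <= l -> l <= x -> clamp l x = l.
Proof. by move=> l0 lx; rewrite /clamp (max_idPl (le_trans l0 lx)) min_r. Qed.

Lemma clamp_le_id (R : realType) (l x : R) : 0 <= x -> clamp l x <= x.
Proof. by move=> x0; rewrite /clamp (max_idPl x0) ge_min lexx. Qed.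

Lemma clamp_unsat (R : realType) (l x : R) : clamp l x < l -> x <= clamp l x.
Proof.
rewrite /clamp gt_min ltxx orbF => lt_l.
by rewrite min_l ?le_max ?lexx // ltW.
Qed.

(* Water-filling: any amount between 0 and m l is reached exactly by the
   clamped shares at a suitable level L (intermediate value theorem). *)
Lemma water_level (R : realType) (l : R) (m : nat) (e : nat -> R) (D : R) :
  0 <= l -> 0 <= D -> D <= m%:R * l ->
  exists L, \sum_(j < m) clamp l (L - e j) = D.
Proof.
move=> l0 D0 Dm.
set F := fun L => \sum_(j < m) clamp l (L - e j).
set M := \sum_(j < m) `|e j|.
have M0 : 0 <= M by apply: sumr_ge0 => *; exact: normr_ge0.
have eM (j : 'I_m) : `|e j| <= M.
  by rewrite /M (bigD1 j) //= lerDl; apply: sumr_ge0 => *; exact: normr_ge0.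
have F_low : F (- M) = 0.
  rewrite /F big1 // => j _; apply: clamp0 => //.
  by have := eM j; have := ler_norm (- e j); rewrite normrN; lra.
have F_high : F (M + l) = m%:R * l.
  rewrite /F (eq_bigr (fun=> l)) => [|j _]; first by rewrite sumr_const card_ord mulr_natl.
  by apply: clamp_top => //; have := eM j; have := ler_norm (e j); lra.
have F_cont : continuous (F : R^o -> R^o).
  apply: (@continuous_bigsum R m (fun j L => clamp l (L - e j))) => j x.
  apply: continuous_min; last exact: cst_continuous.
  apply: continuous_max; last exact: cst_continuous.
  by apply: continuousB; last exact: cst_continuous.
have [L _ FL] : exists2 L, L \in `[- M, M + l] & F L = D.
  apply: IVT (continuous_subspaceT F_cont) _; first by lra.
  by rewrite F_low F_high ge_min D0 le_max Dm orbT.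
by exists L.
Qed.

(* The last agent m fills its positive demand e m at water level L, taking the
   share c j = clamp l (L - e j) from each agent j < m; the pair {j, m} leaves
   l - c j to agent j, whose residual demand becomes e j + c j - l. *)
Section WaterFilling.
Variables (R : realType) (l : R) (m : nat) (e : nat -> R) (L : R).
Hypotheses (l_ge0 : 0 <= l) (e_feas : subset_feasible l m.+1 e)
  (level : \sum_(j < m) clamp l (L - e j) = e m).

Let c j := clamp l (L - e j).

(* Agents above the water level give nothing; the others end at most at L. *)
Lemma water_below_level (s : pred nat) :
  \sum_(j < m | s j) (e j + c j) <=
  l * pair_budget R m.+1 (card_below m (fun j => s j && (L <= e j)))
  + (card_below m (fun j => s j && ~~ (L <= e j)))%:R * L.
Proof.
rewrite (bigID (fun j : 'I_m => L <= e j)) /=; apply: lerD.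
  rewrite (eq_bigr (fun j : 'I_m => e j)).
    exact: subset_feasible_restr.
  by move=> j /andP [_ Le]; rewrite /c clamp0 ?addr0 // subr_le0.
rewrite -sum_const_below; apply: ler_sum => j /andP [_].
rewrite -ltNge => eL; have := @clamp_le_id R l (L - e j); rewrite /c; lra.
Qed.

Lemma water_saturated (S : pred nat) : (forall j, c j < l -> S j) ->
  \sum_(j < m | S j) (e j + c j) <= l * pair_budget R m.+1 (card_below m S).
Proof.
move=> unsat_S.
have below_m j : (j < m)%N -> (j == m) || S j = S j by move=> /ltn_eqF ->.
have := e_feas (fun j => (j == m) || S j).
rewrite (@big_below_recr _ m (fun j => (j == m) || S j)) card_belowS /= eqxx /=.
rewrite (big_below_eq e below_m) (card_below_eq below_m) addn1 pair_budget_succ.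
rewrite -natr1 => feas_S.
have out_S : \sum_(j < m | ~~ S j) c j = (card_below m (fun j => ~~ S j))%:R * l.
  rewrite -sum_const_below; apply: eq_bigr => j notS.
  by apply/le_anti; rewrite clamp_le /= leNgt; apply/negP => /unsat_S; apply/negP.
have split_c : e m = \sum_(j < m | S j) c j + (card_below m (fun j => ~~ S j))%:R * l.
  by rewrite -level -out_S (bigID (fun j : 'I_m => S j)).
have /(congr1 (fun x => x%:R : R)) := card_belowC m S; rewrite /= natrD => countR.
by rewrite big_split /=; rewrite -countR split_c in feas_S; lra.
Qed.

(* Adding to a group s the unsaturated agents outside it costs at least L for
   each of them: the second bound for the concavity argument. *)
Lemma water_above_level (s : pred nat) :
  \sum_(j < m | s j) (e j + c j) <=
  l * pair_budget R m.+1 (card_below m s + card_below m (fun j => ~~ s j && (c j < l)))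
  - (card_below m (fun j => ~~ s j && (c j < l)))%:R * L.
Proof.
pose S j := s j || (c j < l).
have S_in j : (j < m)%N -> S j && s j = s j.
  by rewrite /S; case: (s j); rewrite ?andbF.
have S_out j : (j < m)%N -> S j && ~~ s j = ~~ s j && (c j < l).
  by rewrite /S; case: (s j); rewrite ?andbT.
have := water_saturated (S := S) (fun j unsat => introT orP (or_intror unsat)).
rewrite (card_belowID m S s) (card_below_eq S_in) (card_below_eq S_out).
pose v j := e j + c j.
rewrite (bigID (fun j : 'I_m => s j)) /= (big_below_eq v S_in) (big_below_eq v S_out) {}/v /=.
suff : (card_below m (fun j => ~~ s j && (c j < l)))%:R * L <=
       \sum_(j < m | ~~ s j && (c j < l)) (e j + c j).
  by move=> low sat; rewrite lerBrDr (le_trans _ sat) // lerD2l.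
rewrite -sum_const_below; apply: ler_sum => j /andP [_ unsat].
by have := clamp_unsat unsat; rewrite /c; lra.
Qed.

Lemma water_feasible : subset_feasible l m (fun j => e j + c j - l).
Proof.
move=> s; rewrite sumrB sum_const_below.
suff : \sum_(j < m | s j) (e j + c j) <= l * pair_budget R m.+1 (card_below m s).
  by rewrite pair_budgetS; lra.
have low := water_below_level s.
have high := water_above_level s.
rewrite (card_belowID m s (fun j => L <= e j)) in high *.
exact: pair_budget_interpolate l_ge0 low high.
Qed.

End WaterFilling.

Lemma peel_last (R : realType) (l : R) (m : nat) (e : nat -> R) :
  0 <= l -> subset_feasible l m.+1 e ->
  exists c : nat -> R, (forall j, 0 <= c j <= l) /\ e m <= \sum_(j < m) c j /\
    subset_feasible l m (fun j => e j + c j - l).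
Proof.
move=> l0 feas.
have [em_le0|em_gt0] := lerP (e m) 0.
  exists (fun=> 0); split=> [j|]; first by rewrite lexx.
  split; first by rewrite big1.
  move=> s; rewrite sumrB sum_const_below; under eq_bigr do rewrite addr0.
  by have := subset_feasible_restr s feas; rewrite pair_budgetS; lra.
have em_le : e m <= m%:R * l.
  have none j : (j < m)%N -> pred1 m j = pred0 j by move=> /ltn_eqF.
  have := feas (pred1 m).
  rewrite (@big_below_recr _ m (pred1 m)) card_belowS /= eqxx.
  rewrite (big_below_eq e none) (card_below_eq none) big_pred0 // add0r.
  by rewrite /card_below big_pred0 // add0n /pair_budget /= -[m.+1%:R]natr1; lra.
have [L level] := water_level e l0 (ltW em_gt0) em_le.
exists (fun j => clamp l (L - e j)); split=> [j|].
  by rewrite clamp_ge0 ?clamp_le.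
by split; [rewrite level | exact: water_feasible].
Qed.

(* Shares a i j >= 0 (what agent i receives from the pair {i, j}) covering the
   demands e of agents 0, ..., m-1 without exceeding any pair's capacity l. *)
Definition covers {R : realType} (l : R) (m : nat) (e : nat -> R)
    (a : nat -> nat -> R) : Prop :=
  [/\ forall i j, 0 <= a i j, forall i j, i != j -> a i j + a j i <= l
    & forall i, (i < m)%N -> e i <= \sum_(j < m | (j : nat) != i) a i j].

Lemma pairwise_allocation (R : realType) (l : R) (m : nat) (e : nat -> R) :
  0 <= l -> subset_feasible l m e -> exists a, covers l m e a.
Proof.
move=> l0; elim: m e => [|m IH] e feas.
  by exists (fun _ _ => 0); split=> // *; rewrite addr0.
have [c [c_bnd [c_cover feas']]] := peel_last l0 feas.
have [a' [a'_ge0 a'_pair a'_cover]] := IH _ feas'.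
pose a i j := if (i < m)%N && (j < m)%N then a' i j
  else if (i == m) && (j < m)%N then c j
  else if (j == m) && (i < m)%N then l - c i else 0.
exists a; split.
- move=> i j; have [ci0 cil] := andP (c_bnd i); have [cj0 cjl] := andP (c_bnd j).
  by rewrite /a; repeat case: ifP => _; rewrite ?subr_ge0 ?a'_ge0.
- move=> i j ij; rewrite /a.
  move: (c_bnd i) (c_bnd j) => /andP [ci0 cil] /andP [cj0 cjl].
  by case: (ltngtP i m) => hi; case: (ltngtP j m) => hj /=; [exact: a'_pair|lra..].
- move=> i; rewrite ltnS leq_eqVlt => /orP [/eqP ->|lt_im].
    rewrite (@big_below_recr _ m (fun j => j != m)) eqxx addr0.
    rewrite (eq_bigl predT) => [|j]; last by rewrite /= (ltn_eqF (ltn_ord j)).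
    apply: le_trans c_cover _; apply: ler_sum => j _.
    by rewrite /a ltnn /= eqxx ltn_ord.
  rewrite (@big_below_recr _ m (fun j => j != i)) (gtn_eqF lt_im).
  have -> : a i m = l - c i by rewrite /a ltnn andbF (ltn_eqF lt_im) eqxx lt_im.
  rewrite (eq_bigr (fun j : 'I_m => a' i j)) => [|j _]; last by rewrite /a lt_im ltn_ord.
  by have := a'_cover i lt_im; rewrite /=; lra.
Qed.

Lemma inner_pairs_bound (R : realType) (l : R) m (T : pred nat)
    (g : 'I_m -> 'I_m -> R) :
  (forall i j, i != j -> g i j + g j i <= l) ->
  \sum_(j < m | T j) \sum_(i < m | T i && (i != j)) g j i
    <= l * ((card_below m T)%:R * ((card_below m T)%:R - 1) / 2).
Proof.
move=> pair_le.
have mkif (F : 'I_m -> 'I_m -> R) :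
    \sum_(j < m | T j) \sum_(i < m | T i && (i != j)) F j i =
    \sum_(j < m | T j) \sum_(i < m | T i) (if i != j then F j i else 0).
  by apply: eq_bigr => j _; rewrite big_mkcondr.
have swap : \sum_(j < m | T j) \sum_(i < m | T i && (i != j)) g j i =
            \sum_(j < m | T j) \sum_(i < m | T i && (i != j)) g i j.
  rewrite !mkif exchange_big; apply: eq_bigr => j _; apply: eq_bigr => i _.
  by rewrite eq_sym.
have others (j : 'I_m) : T j ->
    \sum_(i < m | T i && (i != j)) l = ((card_below m T)%:R - 1) * l.
  by move=> Tj; have := sum_const_below m T l; rewrite (bigD1 j Tj) /=; lra.
have twice : \sum_(j < m | T j) \sum_(i < m | T i && (i != j)) (g j i + g i j)
    <= (card_below m T)%:R * (((card_below m T)%:R - 1) * l).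
  rewrite -sum_const_below; apply: ler_sum => j Tj; rewrite -(others j Tj).
  by apply: ler_sum => i /andP [_ ij]; apply: pair_le; rewrite eq_sym.
have := twice; under eq_bigr do rewrite big_split /=; rewrite big_split /= -swap; lra.
Qed.

(* Necessity: the n = m - k agents with the largest demands can only use their
   own reservoirs, the inner pairs and the pairs leaving the group. *)
Lemma tail_necessary (R : realType) m (l1 l2 : R) (f xi0 : 'I_m -> R)
    (xi : 'I_m -> 'I_m -> R) k :
  (forall i, `|xi0 i| <= l1) -> (forall i j, i != j -> `|xi i j| <= l2) ->
  (forall i j, i != j -> `|xi i j| + `|xi j i| <= l2) ->
  (forall i, f i + xi0 i + \sum_(j < m | j != i) xi i j = 0) ->
  \sum_(j < m | (k <= j)%N) `|f j|
    <= l1 * (m - k)%:R + l2 * pair_budget R m (m - k).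
Proof.
move=> xi0_le xi_le xi_pair balance.
pose T j := (k <= j)%N.
pose g (j i : 'I_m) : R := `|xi j i|.
have row (j : 'I_m) : `|f j| <= `|xi0 j| + \sum_(i < m | i != j) g j i.
  have -> : f j = - (xi0 j + \sum_(i < m | i != j) xi j i) by have := balance j; lra.
  by rewrite normrN (le_trans (ler_normD _ _)) // lerD2l ler_norm_sum.
have split_row (j : 'I_m) : T j -> \sum_(i < m | i != j) g j i =
    \sum_(i < m | T i && (i != j)) g j i + \sum_(i < m | ~~ T i) g j i.
  move=> Tj; rewrite (bigID (fun i : 'I_m => T i)) /=.
  congr (_ + _); apply: eq_bigl => i; first by rewrite andbC.
  by case Ti: (T i); rewrite ?andbF ?andbT //; apply: contraFneq Ti => ->.
have outer : \sum_(j < m | T j) \sum_(i < m | ~~ T i) g j i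
    <= (card_below m T)%:R * ((card_below m (fun i => ~~ T i))%:R * l2).
  rewrite -sum_const_below; apply: ler_sum => j Tj.
  rewrite -sum_const_below; apply: ler_sum => i Ti.
  by apply: xi_le; apply: contraNneq Ti => <-.
have inner := inner_pairs_bound T xi_pair.
have rows : \sum_(j < m | T j) `|f j| <= (card_below m T)%:R * l1
    + \sum_(j < m | T j) \sum_(i < m | T i && (i != j)) g j i
    + \sum_(j < m | T j) \sum_(i < m | ~~ T i) g j i.
  rewrite -sum_const_below -addrA -big_split /= -big_split /=.
  by apply: ler_sum => j Tj; rewrite -split_row //; have := xi0_le j; have := row j; lra.
have /(congr1 (fun x => x%:R : R)) := card_belowC m T; rewrite /= natrD => countR.
rewrite pair_budget_split -(card_below_tail m k) -countR.
by move: rows inner outer; rewrite /g; nra.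
Qed.

Lemma sum_le_top (R : realType) (M : nat) (d : nat -> R) :
  (forall i j, (i <= j)%N -> (j < M)%N -> d i <= d j) ->
  forall m, (m <= M)%N -> forall s : pred nat,
  \sum_(j < m | s j) d j <= \sum_(j < m | (m - card_below m s <= j)%N) d j.
Proof.
move=> d_sorted; elim=> [|m IH] le_mM s; first by rewrite !big_ord0.
have le_mM' : (m <= M)%N by lia.
have cnt_le := card_below_le m s.
rewrite big_below_recr card_belowS; case sm: (s m) => /=.
  rewrite big_below_recr (_ : (m.+1 - (card_below m s + 1) <= m)%N = true); last by lia.
  rewrite (_ : (m.+1 - (card_below m s + 1)) = m - card_below m s)%N; last by lia.
  by rewrite lerD2r; apply: IH.
rewrite addr0 addn0; apply: le_trans (IH le_mM' s) _.
rewrite [X in _ <= X]big_mkcond big_ord_recl /=.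
rewrite (_ : (m.+1 - card_below m s <= 0)%N = false); last by lia.
rewrite add0r [X in X <= _]big_mkcond /=; apply: ler_sum => i _.
rewrite /bump /= add1n.
rewrite (_ : (m.+1 - card_below m s <= i.+1)%N = (m - card_below m s <= i)%N); last first.
  by apply/idP/idP; lia.
by case: ifP => // _; apply: d_sorted => //; have := ltn_ord i; lia.
Qed.

Lemma tail_subset_feasible (R : realType) m (l1 l2 : R) (d : nat -> R) :
  (forall i j, (i <= j)%N -> (j < m)%N -> d i <= d j) ->
  (forall k, (k < m)%N -> \sum_(j < m | (k <= j)%N) d j
                          <= l1 * (m - k)%:R + l2 * pair_budget R m (m - k)) ->
  subset_feasible l2 m (fun j => d j - l1).
Proof.
move=> d_sorted tails s; rewrite sumrB sum_const_below.
have top := sum_le_top d_sorted (leqnn m) s.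
have n_le := card_below_le m s.
have [n0|n_gt0] := eqVneq (card_below m s) 0%N.
  move: top; rewrite n0 subn0 [X in _ <= X]big_pred0 => [|j]; last first.
    by apply/negP; have := ltn_ord j; lia.
  by rewrite /pair_budget !mul0r mulr0; lra.
have lt_k : (m - card_below m s < m)%N by lia.
by have := tails _ lt_k; rewrite subKn //; lra.
Qed.

(* Rescaling shares that cover the demands |f i| by -f i / (capacity of i)
   turns them into a solution of the balance equations. *)
Lemma balance_from_shares (R : realType) m (l1 l2 : R) (f : 'I_m -> R)
    (a : nat -> nat -> R) :
  0 <= l1 -> (forall i j, 0 <= a i j) ->
  (forall i j, i != j -> a i j + a j i <= l2) ->
  (forall i : 'I_m, `|f i| <= l1 + \sum_(j < m | j != i) a i j) ->
  exists (xi0 : 'I_m -> R) (xi : 'I_m -> 'I_m -> R),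
      (forall i, `|xi0 i| <= l1) /\
      (forall i j, i != j -> `|xi i j| <= l2) /\
      (forall i j, i != j -> `|xi i j| + `|xi j i| <= l2) /\
      (forall i, f i + xi0 i + \sum_(j < m | j != i) xi i j = 0).
Proof.
move=> l1_ge0 a_ge0 a_pair cover.
pose Y i := l1 + \sum_(j < m | j != i) a i j.
pose r i := f i / Y i.
have r_le i : `|r i| <= 1.
  have [Y0|Y_neq0] := eqVneq (Y i) 0; first by rewrite /r Y0 invr0 mulr0 normr0.
  have Y_gt0 : 0 < Y i by rewrite lt_def Y_neq0 /=; apply: le_trans (cover i).
  by rewrite /r normrM normfV (gtr0_norm Y_gt0) ler_pdivrMr // mul1r.
have rY i : r i * Y i = f i.
  have [Y0|Y_neq0] := eqVneq (Y i) 0; last by rewrite mulfVK.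
  have := cover i; rewrite -/(Y i) Y0 normr_le0 => /eqP f0.
  by rewrite /r f0 !mul0r.
have a_le i j : i != j -> a i j <= l2.
  by move=> ij; have := a_pair i j ij; have := a_ge0 j i; lra.
exists (fun i => - r i * l1), (fun i j => - r i * a i j); split.
  move=> i; rewrite normrM normrN (ger0_norm l1_ge0).
  by have := r_le i; have := normr_ge0 (r i); nra.
split.
  move=> i j ij; rewrite normrM normrN (ger0_norm (a_ge0 i j)).
  by have := r_le i; have := normr_ge0 (r i); have := a_le i j ij; have := a_ge0 i j; nra.
split.
  move=> i j ij; rewrite !normrM !normrN (ger0_norm (a_ge0 i j)) (ger0_norm (a_ge0 j i)).
  have := r_le i; have := normr_ge0 (r i); have := r_le j; have := normr_ge0 (r j).
  by have := a_pair i j ij; have := a_ge0 i j; have := a_ge0 j i; nra.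
by move=> i; rewrite -mulr_sumr; have := rY i; rewrite /Y mulrDr; lra.
Qed.

Theorem theorem2 (R : realType) (m : nat) (lambda1 lambda2 : R)
  (f : 'I_m -> R) :
  (1 <= m)%N -> 0 <= lambda1 -> 0 <= lambda2 ->
  (forall i j : 'I_m, (i <= j)%N -> `|f i| <= `|f j|) ->
  (exists (xi0 : 'I_m -> R) (xi : 'I_m -> 'I_m -> R),
      (forall i, `|xi0 i| <= lambda1) /\
      (forall i j, i != j -> `|xi i j| <= lambda2) /\
      (forall i j, i != j -> `|xi i j| + `|xi j i| <= lambda2) /\
      (forall i, f i + xi0 i + \sum_(j < m | j != i) xi i j = 0))
  <->
  (forall k : nat, (k < m)%N ->
      \sum_(j < m | (k <= j)%N) `|f j|
        <= lambda1 * (m - k)%:R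
           + lambda2 * (((m - k) * (m + k - 1))%:R / 2)).
Proof.
move=> m_ge1 l1_ge0 l2_ge0 f_sorted.
have tail_budget k : (k < m)%N ->
    ((m - k) * (m + k - 1))%:R / 2 = pair_budget R m (m - k).
  by move=> /ltnW /pair_budget_tail ->.
split=> [[xi0 [xi [xi0_le [xi_le [xi_pair balance]]]]] k k_lt | tails].
  by rewrite tail_budget //; exact: (tail_necessary k xi0_le xi_le xi_pair balance).
case: m f m_ge1 f_sorted tails tail_budget => [//|m] f _ f_sorted tails tail_budget.
pose d j := `|f (inord j)|.
have d_sorted i j : (i <= j)%N -> (j < m.+1)%N -> d i <= d j.
  by move=> le_ij lt_jm; apply: f_sorted; rewrite /= !inordK //; lia.
have feas : subset_feasible lambda2 m.+1 (fun j => d j - lambda1).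
  apply: tail_subset_feasible d_sorted _ => k k_lt.
  rewrite -tail_budget // (eq_bigr (fun j : 'I_m.+1 => `|f j|)) ?tails //.
  by move=> j _; rewrite /d inord_val.
have [a [a_ge0 a_pair a_cover]] := pairwise_allocation l2_ge0 feas.
apply: balance_from_shares l1_ge0 a_ge0 a_pair _ => i.
by have := a_cover i (ltn_ord i); rewrite /d inord_val; lra.
Qed.
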